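(* Let $C\subseteq\mathbb{R}^n$ be a nonempty compact convex set with diameter $D$, and let $f:\mathbb{R}^n\to\mathbb{R}$ be an abs-smooth function that is convex on $C$, with curvature constant $\mathcal{C}_f$ on $C$. Let $x^*\in C$ be a minimizer of $f$ on $C$ and fix $\epsilon\ge0$. Consider the relaxed ASFW iteration: $x_0\in C$, and for $t=0,1,2,\dots$ set $a_t=2t+2$, $A_t=\sum_{i=0}^t a_i=(t+1)(t+2)$, $\alpha_t=a_t/A_t=2/(t+2)$, choose $v_t\in C$ with $$\Delta f(x_t;\alpha_t(v_t-x_t))\le\min_{w\in C}\Delta f(x_t;\alpha_t(w-x_t))+\tfrac12\epsilon\alpha_t^2\mathcal{C}_f,$$ and set $x_{t+1}=(1-\alpha_t)x_t+\alpha_t v_t$. Define $$L_t=\frac{1}{A_t}\Big(\sum_{i=0}^t a_i f(x_i)+\sum_{i=0}^t a_i\Big[\frac{\Delta f(x_i;\alpha_i(v_i-x_i))}{\alpha_i}-\frac{\alpha_i}{2}\mathcal{C}_f(1+\epsilon)\Big]\Big)$$ and $G_t=f(x_{t+1})-L_t$. Then for every $t\ge0$, $$f(x_{t+1})-f(x^* )\le G_t\le\frac{4\,\mathcal{C}_f}{t+2}(1+\epsilon).$$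
   Context: A function $f:\mathbb{R}^n\to\mathbb{R}$ is abs-smooth if it is locally Lipschitz and admits an abs-smooth form: for some $s\in\mathbb{N}\cup\{0\}$ there are $F=(F_1,\dots,F_s)\in\mathcal{C}^d(\mathbb{R}^{n+s+s},\mathbb{R}^s)$ and $\varphi\in\mathcal{C}^d(\mathbb{R}^{n+s},\mathbb{R})$ with $d\ge1$ such that $y=f(x)$ is computed by $z_i=F_i(x,z_1,\dots,z_{i-1},|z_1|,\dots,|z_{i-1}|)$ for $i=1,\dots,s$ and $y=\varphi(x,z)$. For a point $\mathring{x}$, write $\mathring z=z(\mathring x)$ and let $Z=\partial_x F$, $M=\partial_z F$, $L=\partial_{|z|}F$ (evaluated at $(\mathring x,\mathring z,|\mathring z|)$; $M,L$ strictly lower triangular), $a=\partial_x\varphi$, $b=\partial_z\varphi$ (evaluated at $(\mathring x,\mathring z)$). The piecewise linearization of $f$ at $\mathring x$ is $f_{PL,\mathring x}(x)=d_0+a^Tx+b^Tz$ where $z$ solves $z=c+Zx+Mz+L|z|$, with constants $c,d_0$ chosen so that $f_{PL,\mathring x}(\mathring x)=f(\mathring x)$ (namely $c=\mathring z-Z\mathring x-M\mathring z-L|\mathring z|$, $d_0=f(\mathring x)-a^T\mathring x-b^T\mathring z$). The abs-linearization is $\Delta f(\mathring x;x-\mathring x):=f_{PL,\mathring x}(x)-f(\mathring x)$. The curvature constant of $f$ on $C$ is $$\mathcal{C}_f:=\sup_{x,v\in C,\ \alpha\in(0,1],\ y=x+\alpha(v-x)}\frac{2}{\alpha^2}\big|f(y)-f(x)-\Delta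 f(x;y-x)\big|,$$ which is finite for compact $C$. *)

From HB Require Import structures.
From mathcomp Require Import all_boot all_order all_algebra.
From mathcomp Require Import all_classical all_reals all_analysis.
Set Implicit Arguments. Unset Strict Implicit. Unset Printing Implicit Defensive.
Import Order.TTheory GRing.Theory Num.Theory.
Import numFieldNormedType.Exports.
Local Open Scope classical_set_scope.
Local Open Scope ring_scope.

Definition absv {R : realType} {s : nat} (z : 'rV[R]_s) : 'rV[R]_s :=
  map_mx (fun t => `|t|) z.

(* Sequential evaluation of z_i = G_i(x, z_1..z_{i-1}, |z_1|..|z_{i-1}|),
   i = 1..s: at step k the k-th entry is computed from the entries < k
   (entries >= k are still 0 and, by [tri_dep], irrelevant). *)
Definition seq_solve {R : realType} {n s : nat}
  (G : 'rV[R]_n -> 'rV[R]_s -> 'rV[R]_s -> 'rV[R]_s) (x : 'rV[R]_n) : 'rV[R]_s :=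
  iteri s (fun k w => \row_j (if nat_of_ord j == k then G x w (absv w) 0 j else w 0 j)) 0.

Definition tri_dep {R : realType} {n s : nat}
  (F : 'rV[R]_n * 'rV[R]_s * 'rV[R]_s -> 'rV[R]_s) : Prop :=
  forall (x : 'rV[R]_n) (z w z' w' : 'rV[R]_s) (i : 'I_s),
    (forall j : 'I_s, (j < i)%N -> z 0 j = z' 0 j /\ w 0 j = w' 0 j) ->
    F (x, z, w) 0 i = F (x, z', w') 0 i.

(* continuously differentiable (C^1): differentiable everywhere with
   continuous directional derivatives (= continuous differential, finite dim.) *)
Definition C1 {R : realType} {U V : normedModType R} (g : U -> V) : Prop :=
  (forall p, differentiable g p) /\ (forall u : U, continuous (fun p => 'd g p u)).

Definition loc_lipschitz {R : realType} {n : nat} (f : 'rV[R]_n -> R) : Prop :=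
  forall x, exists r : R, 0 < r /\ exists K : R,
    forall y z, ball x r y -> ball x r z -> `|f y - f z| <= K * `|y - z|.

Definition zfun {R : realType} {n s : nat}
  (F : 'rV[R]_n * 'rV[R]_s * 'rV[R]_s -> 'rV[R]_s) (x : 'rV[R]_n) : 'rV[R]_s :=
  seq_solve (fun x z w => F (x, z, w)) x.

Definition evalf {R : realType} {n s : nat}
  (F : 'rV[R]_n * 'rV[R]_s * 'rV[R]_s -> 'rV[R]_s) (phi : 'rV[R]_n * 'rV[R]_s -> R)
  (x : 'rV[R]_n) : R := phi (x, zfun F x).

Definition abs_smooth_form {R : realType} {n s : nat} (f : 'rV[R]_n -> R)
  (F : 'rV[R]_n * 'rV[R]_s * 'rV[R]_s -> 'rV[R]_s) (phi : 'rV[R]_n * 'rV[R]_s -> R) : Prop :=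
  [/\ loc_lipschitz f, C1 F, C1 phi, tri_dep F & forall x, f x = evalf F phi x].

Definition fPL {R : realType} {n s : nat}
  (F : 'rV[R]_n * 'rV[R]_s * 'rV[R]_s -> 'rV[R]_s) (phi : 'rV[R]_n * 'rV[R]_s -> R)
  (xo : 'rV[R]_n) (x : 'rV[R]_n) : R :=
  let zo := zfun F xo in
  let p := (xo, zo, absv zo) in
  let Z := fun u => 'd F p (u, 0, 0) in
  let M := fun u => 'd F p (0, u, 0) in
  let L := fun u => 'd F p (0, 0, u) in
  let a := fun u => 'd phi (xo, zo) (u, 0) in
  let b := fun u => 'd phi (xo, zo) (0, u) in
  let c := zo - Z xo - M zo - L (absv zo) in
  let d0 := evalf F phi xo - a xo - b zo in
  d0 + a x + b (seq_solve (fun x z w => c + Z x + M z + L w) x).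

Definition abs_lin {R : realType} {n s : nat}
  (F : 'rV[R]_n * 'rV[R]_s * 'rV[R]_s -> 'rV[R]_s) (phi : 'rV[R]_n * 'rV[R]_s -> R)
  (xo dx : 'rV[R]_n) : R :=
  fPL F phi xo (xo + dx) - evalf F phi xo.

Definition curv_set {R : realType} {n : nat} (f : 'rV[R]_n -> R)
  (Df : 'rV[R]_n -> 'rV[R]_n -> R) (C : set 'rV[R]_n) : set R :=
  [set r | exists x v : 'rV[R]_n, exists alpha : R,
     [/\ C x, C v, 0 < alpha, alpha <= 1 &
      r = 2 / alpha ^+ 2 * `|f (x + alpha *: (v - x)) - f x - Df x (alpha *: (v - x))|]].

Definition curv_const {R : realType} {n : nat} (f : 'rV[R]_n -> R)
  (Df : 'rV[R]_n -> 'rV[R]_n -> R) (C : set 'rV[R]_n) : R :=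
  sup (curv_set f Df C).

Definition cvx_set {R : realType} {n : nat} (C : set 'rV[R]_n) : Prop :=
  forall x y, C x -> C y -> forall t : R, 0 <= t <= 1 -> C (t *: x + (1 - t) *: y).

Definition cvx_on {R : realType} {n : nat} (f : 'rV[R]_n -> R) (C : set 'rV[R]_n) : Prop :=
  forall x y, C x -> C y -> forall t : R, 0 <= t <= 1 ->
    f (t *: x + (1 - t) *: y) <= t * f x + (1 - t) * f y.

Definition aw {R : realType} (t : nat) : R := (2 * t + 2)%N%:R.
Definition Aw {R : realType} (t : nat) : R := \sum_(i < t.+1) aw i.
Definition alpha {R : realType} (t : nat) : R := aw t / Aw t.

Definition Lt {R : realType} {n : nat} (f : 'rV[R]_n -> R) (Df : 'rV[R]_n -> 'rV[R]_n -> R)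
  (Cf eps : R) (x v : nat -> 'rV[R]_n) (t : nat) : R :=
  (Aw t)^-1 * (\sum_(i < t.+1) aw i * f (x i)
     + \sum_(i < t.+1) aw i * (Df (x i) (alpha i *: (v i - x i)) / alpha i
                               - alpha i / 2 * Cf * (1 + eps))).

Definition Gt {R : realType} {n : nat} (f : 'rV[R]_n -> R) (Df : 'rV[R]_n -> 'rV[R]_n -> R)
  (Cf eps : R) (x v : nat -> 'rV[R]_n) (t : nat) : R :=
  f (x t.+1) - Lt f Df Cf eps x v t.

From HB Require Import structures.
From mathcomp Require Import all_boot all_order all_algebra.
From mathcomp Require Import all_classical all_reals all_analysis.
From mathcomp Require Import ring lra.
Set Implicit Arguments. Unset Strict Implicit. Unset Printing Implicit Defensive.
Import Order.TTheory GRing.Theory Num.Theory.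
Import numFieldNormedType.Exports.
Local Open Scope classical_set_scope.
Local Open Scope ring_scope.

(* The usual primal-dual Frank-Wolfe argument; only the curvature bound of the
   model Delta f is used, not its abs-smooth origin.  Writing d_i for
   Delta f(x_i; alpha_i (v_i - x_i)) and K for the curvature constant, the
   curvature bound gives the descent step
     f(x_{i+1}) <= f(x_i) + d_i + alpha_i^2 K / 2,
   and together with convexity of f and the near-optimality of v_i it gives,
   for every y in C,
     d_i <= alpha_i (f(y) - f(x_i)) + alpha_i^2 K (1 + eps) / 2.
   The second inequality makes L_t a lower bound of f on all of C.  Multiplying the first by A_i and using
   A_i alpha_i = a_i, a_i alpha_i <= 4 and A_i - a_i = A_(i-1), it telescopes to
     A_t f(x_{t+1}) <= sum_i a_i (f(x_i) + d_i / alpha_i) + 2 (t + 1) K,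
   so that A_t G_t <= 4 (t + 1) K (1 + eps) with A_t = (t + 1)(t + 2). *)

Section StepWeights.
Variable R : realType.

Lemma aw_E (t : nat) : aw t = 2 * (t%:R : R) + 2.
Proof. by rewrite /aw natrD natrM. Qed.

Lemma Aw_E (t : nat) : Aw t = ((t%:R : R) + 1) * (t%:R + 2).
Proof.
elim: t => [|t IH]; first by rewrite /Aw big_ord1 aw_E mulr0n; lra.
by rewrite /Aw big_ord_recr /= -/(Aw t) IH aw_E -natr1; lra.
Qed.

Lemma alpha_E (t : nat) : alpha t = 2 / ((t%:R : R) + 2).
Proof.
rewrite /alpha aw_E Aw_E.
have t1_neq0 : (t%:R : R) + 1 != 0 by rewrite lt0r_neq0 // ltr_wpDl.
have t2_neq0 : (t%:R : R) + 2 != 0 by rewrite lt0r_neq0 // ltr_wpDl.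
by field; rewrite t1_neq0 t2_neq0.
Qed.

Lemma aw_gt0 (t : nat) : 0 < (aw t : R).
Proof. by rewrite aw_E ltr_wpDl // mulr_ge0. Qed.

Lemma Aw_gt0 (t : nat) : 0 < (Aw t : R).
Proof. by rewrite Aw_E mulr_gt0 // ltr_wpDl. Qed.

Lemma alpha_gt0 (t : nat) : 0 < (alpha t : R).
Proof. by rewrite alpha_E divr_gt0 // ltr_wpDl. Qed.

Lemma alpha_le1 (t : nat) : (alpha t : R) <= 1.
Proof. by rewrite alpha_E ler_pdivrMr ?ltr_wpDl // mul1r lerDr. Qed.

Lemma Aw0 : (Aw 0 : R) = aw 0.
Proof. by rewrite /Aw big_ord1. Qed.

Lemma AwS (t : nat) : (Aw t.+1 : R) = Aw t + aw t.+1.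
Proof. by rewrite /Aw big_ord_recr. Qed.

Lemma Aw_mul_alpha (t : nat) : (Aw t : R) * alpha t = aw t.
Proof. by rewrite /alpha mulrC divfK // lt0r_neq0 // Aw_gt0. Qed.

Lemma aw_mul_alpha_le4 (t : nat) : (aw t : R) * alpha t <= 4.
Proof.
have t2_gt0 : 0 < (t%:R : R) + 2 by rewrite ltr_wpDl.
by rewrite aw_E alpha_E mulrA ler_pdivrMr //; lra.
Qed.

End StepWeights.

Lemma convex_combE (R : pzRingType) (V : lmodType R) (a : R) (y z : V) :
  a *: y + (1 - a) *: z = z + a *: (y - z).
Proof. by rewrite scalerBl scale1r scalerBr addrCA. Qed.

Section CurvatureConstant.
Variables (R : realType) (n : nat) (f : 'rV[R]_n -> R).
Variables (Df : 'rV[R]_n -> 'rV[R]_n -> R) (C : set 'rV[R]_n).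
Hypothesis curv_set_ub : has_ubound (curv_set f Df C).

Lemma curv_const_ub (y w : 'rV[R]_n) (a : R) : C y -> C w -> 0 < a -> a <= 1 ->
  `|f (y + a *: (w - y)) - f y - Df y (a *: (w - y))| <= a ^+ 2 / 2 * curv_const f Df C.
Proof.
move=> Cy Cw a_gt0 a_le1.
set e := `|_|.
have e_in : curv_set f Df C (2 / a ^+ 2 * e) by exists y, w, a.
have e_le := sup_upper_bound (conj (ex_intro _ _ e_in) curv_set_ub) e_in.
have -> : e = a ^+ 2 / 2 * (2 / a ^+ 2 * e) by field; rewrite lt0r_neq0.
by rewrite ler_wpM2l // divr_ge0 // sqr_ge0.
Qed.

Lemma curv_const_ge0 : C !=set0 -> 0 <= curv_const f Df C.
Proof.
case=> c Cc; have := @curv_const_ub c c 1 Cc Cc ltr01 (lexx _).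
by rewrite expr1n => /(le_trans (normr_ge0 _)); lra.
Qed.

End CurvatureConstant.

Section GapRecursion.
Variables (R : realType) (fx d : nat -> R) (fmin K eps : R).
Hypothesis K_ge0 : 0 <= K.
Hypothesis eps_ge0 : 0 <= eps.
Hypothesis descent : forall i, fx i.+1 <= fx i + d i + alpha i ^+ 2 / 2 * K.
Hypothesis model_ub :
  forall i, d i <= alpha i * (fmin - fx i) + alpha i ^+ 2 / 2 * K * (1 + eps).

Definition lower_model (t : nat) : R :=
  (Aw t)^-1 * (\sum_(i < t.+1) aw i * fx i
     + \sum_(i < t.+1) aw i * (d i / alpha i - alpha i / 2 * K * (1 + eps))).

Lemma lower_modelE t : lower_model t =
  (Aw t)^-1 * \sum_(i < t.+1) aw i * (fx i + d i / alpha i - alpha i / 2 * K * (1 + eps)).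
Proof.
rewrite /lower_model -big_split /=; congr (_ * _).
by apply: eq_bigr => i _; ring.
Qed.

Lemma lower_model_le t : lower_model t <= fmin.
Proof.
rewrite lower_modelE mulrC ler_pdivrMr ?Aw_gt0 // /Aw mulr_sumr.
apply: ler_sum => i _; rewrite [fmin * _]mulrC ler_pM2l ?aw_gt0 //.
have d_ub : d i / alpha i <= fmin - fx i + alpha i / 2 * K * (1 + eps).
  by rewrite ler_pdivrMr ?alpha_gt0 //; have := model_ub i; lra.
lra.
Qed.

Lemma weighted_descent_step i :
  Aw i * fx i.+1 <= (Aw i - aw i) * fx i + aw i * (fx i + d i / alpha i) + 2 * K.
Proof.
have d_term : aw i * (d i / alpha i) = Aw i * d i.
  by rewrite -Aw_mul_alpha; field; rewrite lt0r_neq0 ?alpha_gt0.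
have K_term : Aw i * (alpha i ^+ 2 / 2 * K) <= 2 * K.
  have -> : Aw i * (alpha i ^+ 2 / 2 * K) = aw i * alpha i * (K / 2).
    by rewrite -Aw_mul_alpha; ring.
  have := ler_wpM2r (divr_ge0 K_ge0 (ler0n _ 2)) (aw_mul_alpha_le4 R i); lra.
have := ler_wpM2l (ltW (Aw_gt0 R i)) (descent i).
by rewrite [aw i * (_ + _)]mulrDr d_term; lra.
Qed.

Lemma weighted_descent t :
  Aw t * fx t.+1 <= \sum_(i < t.+1) aw i * (fx i + d i / alpha i) + 2 * t.+1%:R * K.
Proof.
elim: t => [|t IH].
  by have := weighted_descent_step 0; rewrite Aw0 big_ord1 subrr mul0r add0r mulr1.
have := weighted_descent_step t.+1; rewrite AwS addrK big_ord_recr /= -natr1.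
lra.
Qed.

Lemma curvature_terms_le t :
  \sum_(i < t.+1) aw i * (alpha i / 2 * K * (1 + eps)) <= 2 * t.+1%:R * K * (1 + eps).
Proof.
have -> : 2 * t.+1%:R * K * (1 + eps) = \sum_(i < t.+1) 2 * (K * (1 + eps)).
  by rewrite sumr_const card_ord -mulr_natr; ring.
have Keps_ge0 : 0 <= K * (1 + eps) / 2 by rewrite !mulr_ge0 // addr_ge0.
apply: ler_sum => i _.
have -> : aw i * (alpha i / 2 * K * (1 + eps)) = aw i * alpha i * (K * (1 + eps) / 2).
  by ring.
have := ler_wpM2r Keps_ge0 (aw_mul_alpha_le4 R i); lra.
Qed.

Lemma lower_model_gap t : fx t.+1 - lower_model t <= 4 * K / (t%:R + 2) * (1 + eps).
Proof.
have Aw_pos := Aw_gt0 R t.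
have -> : 4 * K / (t%:R + 2) * (1 + eps) = (Aw t)^-1 * (4 * t.+1%:R * K * (1 + eps)).
  by rewrite Aw_E -natr1; field; rewrite !lt0r_neq0 // ltr_wpDl.
rewrite lower_modelE -[fx t.+1](mulKf (lt0r_neq0 Aw_pos)) -mulrBr.
rewrite ler_pM2l ?invr_gt0 //.
have := weighted_descent t; have := curvature_terms_le t.
have -> : \sum_(i < t.+1) aw i * (fx i + d i / alpha i - alpha i / 2 * K * (1 + eps)) =
    \sum_(i < t.+1) aw i * (fx i + d i / alpha i)
    - \sum_(i < t.+1) aw i * (alpha i / 2 * K * (1 + eps)).
  by rewrite -sumrB; apply: eq_bigr => i _; rewrite mulrBr.
have := mulr_ge0 (mulr_ge0 K_ge0 eps_ge0) (ler0n R t.+1).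
lra.
Qed.

End GapRecursion.

Section FrankWolfeIterates.
Variables (R : realType) (n : nat) (f : 'rV[R]_n -> R).
Variables (Df : 'rV[R]_n -> 'rV[R]_n -> R) (C : set 'rV[R]_n) (eps : R).
Variables x v : nat -> 'rV[R]_n.
Hypothesis C_convex : cvx_set C.
Hypothesis f_convex : cvx_on f C.
Hypothesis curv_set_ub : has_ubound (curv_set f Df C).
Hypothesis x0_in : C (x 0%N).
Hypothesis v_in : forall t, C (v t).
Hypothesis v_near_opt : forall t (w : 'rV[R]_n), C w ->
  Df (x t) (alpha t *: (v t - x t))
    <= Df (x t) (alpha t *: (w - x t)) + 1 / 2 * eps * alpha t ^+ 2 * curv_const f Df C.
Hypothesis x_step : forall t, x t.+1 = (1 - alpha t) *: x t + alpha t *: v t.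

Lemma fw_iterate_in t : C (x t).
Proof.
elim: t => [|t IH] //; rewrite x_step addrC.
by apply: C_convex => //; rewrite ltW ?alpha_gt0 ?alpha_le1.
Qed.

Lemma fw_descent t : f (x t.+1) <=
  f (x t) + Df (x t) (alpha t *: (v t - x t)) + alpha t ^+ 2 / 2 * curv_const f Df C.
Proof.
have := curv_const_ub curv_set_ub (fw_iterate_in t) (v_in t) (alpha_gt0 R t) (alpha_le1 R t).
have -> : x t + alpha t *: (v t - x t) = x t.+1.
  by rewrite x_step [RHS]addrC convex_combE.
by move=> /ler_normlP [_]; lra.
Qed.

Lemma fw_model_ub (y : 'rV[R]_n) t : C y ->
  Df (x t) (alpha t *: (v t - x t))
    <= alpha t * (f y - f (x t)) + alpha t ^+ 2 / 2 * curv_const f Df C * (1 + eps).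
Proof.
move=> Cy; have near_opt := v_near_opt t Cy.
have := curv_const_ub curv_set_ub (fw_iterate_in t) Cy (alpha_gt0 R t) (alpha_le1 R t).
move=> /ler_normlP [curv _].
have alpha_01 : 0 <= (alpha t : R) <= 1 by rewrite (ltW (alpha_gt0 R t)) alpha_le1.
have := f_convex Cy (fw_iterate_in t) alpha_01.
by rewrite convex_combE; lra.
Qed.

End FrankWolfeIterates.

Theorem mainTheorem5 (R : realType) (n s : nat)
  (f : 'rV[R]_n -> R)
  (F : 'rV[R]_n * 'rV[R]_s * 'rV[R]_s -> 'rV[R]_s) (phi : 'rV[R]_n * 'rV[R]_s -> R)
  (C : set 'rV[R]_n) (xstar : 'rV[R]_n) (eps : R) (x v : nat -> 'rV[R]_n) :
  abs_smooth_form f F phi ->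
  C !=set0 -> compact C -> cvx_set C ->
  cvx_on f C ->
  has_ubound (curv_set f (abs_lin F phi) C) ->
  C xstar -> (forall y, C y -> f xstar <= f y) ->
  0 <= eps ->
  C (x 0%N) ->
  (forall t, C (v t)) ->
  (forall t (w : 'rV[R]_n), C w ->
     abs_lin F phi (x t) (alpha t *: (v t - x t))
       <= abs_lin F phi (x t) (alpha t *: (w - x t))
          + 1 / 2 * eps * alpha t ^+ 2 * curv_const f (abs_lin F phi) C) ->
  (forall t, x t.+1 = (1 - alpha t) *: x t + alpha t *: v t) ->
  forall t : nat,
    f (x t.+1) - f xstar <= Gt f (abs_lin F phi) (curv_const f (abs_lin F phi) C) eps x v t
    /\ Gt f (abs_lin F phi) (curv_const f (abs_lin F phi) C) eps x v t
       <= 4 * curv_const f (abs_lin F phi) C / (t%:R + 2) * (1 + eps).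
Proof.
move=> _ C_ne0 _ C_convex f_convex curv_ub xstar_in _ eps_ge0 x0_in v_in v_near_opt x_step t.
set Df := abs_lin F phi; set K := curv_const f Df C.
have K_ge0 : 0 <= K by exact: curv_const_ge0.
have descent := fw_descent C_convex curv_ub x0_in v_in x_step.
have model_ub i := fw_model_ub C_convex f_convex curv_ub x0_in v_in v_near_opt x_step
  i xstar_in.
have LtE : Lt f Df K eps x v t =
  lower_model (fun i => f (x i)) (fun i => Df (x i) (alpha i *: (v i - x i))) K eps t.
  by [].
rewrite /Gt LtE; split.
- by have := lower_model_le model_ub t; lra.
- exact: lower_model_gap.
Qed.
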